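(* Let $m\in\{1,2\}$ and $\gamma\in(\gamma_\star,\gamma_1]$. Then for every $z\in(0,z_1]$ one has $C(V_1;\gamma,z,P_8)>C_1$. Consequently any $z\in(0,z_M]$ with $C(V_1;\gamma,z,P_8)=C_1$ lies in $(z_1,z_M]$.
   Context: Fix $m\in\{1,2\}$. For $z>0$ put $\lambda=1+m\gamma z$, $a_1=1+\frac{m(\gamma-1)}{2}$, $a_2=\frac{m(\gamma-1)+mz\gamma(\gamma-3)}{2}$, $a_3=\frac{mz\gamma(\gamma-1)}{2}$, $G(V,C;\gamma,z)=C^2[(m+1)V+2mz]-V(1+V)(\lambda+V)$, $F(V,C;\gamma,z)=C\{C^2[1+\frac{mz}{1+V}]-a_1(1+V)^2+a_2(1+V)-a_3\}$; ODE $\frac{dC}{dV}=\frac FG$. $V_1=-\frac2{\gamma+1}$, $C_1=\frac{\sqrt{2\gamma(\gamma-1)}}{\gamma+1}$. $z_M=(\sqrt\gamma+\sqrt2)^{-2}$; $w(z)=\sqrt{1-2(\gamma+2)z+(\gamma-2)^2z^2}$, $V_8=\frac{-1+(\gamma-2)z+w}{2}$, $C_8=1+V_8$, $P_8=(V_8,C_8)$. $z_1=\frac{\sqrt5-1}{2(1+\sqrt5+\gamma)}$ (the value with $C_8=\sqrt{-V_8}$). $\gamma_1=1+\sqrt2$; $\gamma_\star\ (\approx1.7)$ is the value with $C_1(\gamma_\star)=\sqrt{-\frac{\gamma_\star}{2+\sqrt{2\gamma_\star}}V_1(\gamma_\star)}$. For $z\in(0,z_M]$, $C(\cdot;\gamma,z,P_8):[V_1,V_8]\to(0,\infty)$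 is the real-analytic solution of the ODE near $V_8$ with $C(V_8)=C_8$ and $C'(V_8)$ equal to the unique negative root of $-G_Cc^2+(F_C-G_V)c+F_V=0$ (partials at $P_8$), continued to $[V_1,V_8]$. *)

From Stdlib Require Import Reals.
From Coquelicot Require Import Coquelicot.
Open Scope R_scope.

(* Self-similar ODE dC/dV = F/G with parameters m, gamma (g), z. *)
Definition lam (m g z : R) : R := 1 + m * g * z.
Definition a1 (m g : R) : R := 1 + m * (g - 1) / 2.
Definition a2 (m g z : R) : R := (m * (g - 1) + m * z * g * (g - 3)) / 2.
Definition a3 (m g z : R) : R := m * z * g * (g - 1) / 2.

Definition Gf (m g z V C : R) : R :=
  C ^ 2 * ((m + 1) * V + 2 * m * z) - V * (1 + V) * (lam m g z + V).
Definition Ff (m g z V C : R) : R :=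
  C * (C ^ 2 * (1 + m * z / (1 + V)) - a1 m g * (1 + V) ^ 2
       + a2 m g z * (1 + V) - a3 m g z).

Definition Vpt1 (g : R) : R := - (2 / (g + 1)).
Definition Cpt1 (g : R) : R := sqrt (2 * g * (g - 1)) / (g + 1).

Definition zM (g : R) : R := / (sqrt g + sqrt 2) ^ 2.
Definition wz (g z : R) : R := sqrt (1 - 2 * (g + 2) * z + (g - 2) ^ 2 * z ^ 2).
Definition Vpt8 (g z : R) : R := (-1 + (g - 2) * z + wz g z) / 2.
Definition Cpt8 (g z : R) : R := 1 + Vpt8 g z.

Definition z1 (g : R) : R := (sqrt 5 - 1) / (2 * (1 + sqrt 5 + g)).
Definition gamma1 : R := 1 + sqrt 2.

(* gamma_star: the value gs > 1 with Cpt1(gs) = sqrt(-(gs/(2+sqrt(2 gs))) Vpt1(gs))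
   (unique in (1, +oo); approximately 1.7). *)
Definition is_gamma_star (gs : R) : Prop :=
  1 < gs /\ Cpt1 gs = sqrt (- (gs / (2 + sqrt (2 * gs))) * Vpt1 gs).

Definition G_V (m g z : R) : R := Derive (fun V => Gf m g z V (Cpt8 g z)) (Vpt8 g z).
Definition G_C (m g z : R) : R := Derive (fun C => Gf m g z (Vpt8 g z) C) (Cpt8 g z).
Definition F_V (m g z : R) : R := Derive (fun V => Ff m g z V (Cpt8 g z)) (Vpt8 g z).
Definition F_C (m g z : R) : R := Derive (fun C => Ff m g z (Vpt8 g z) C) (Cpt8 g z).

Definition is_neg_slope (m g z c : R) : Prop :=
  c < 0 /\ - G_C m g z * c ^ 2 + (F_C m g z - G_V m g z) * c + F_V m g z = 0.

(* C is (a representative of) the solution C(.; gamma, z, P8) on [Vpt1, Vpt8]: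
   - real-analytic near Vpt8 (given by a convergent power series around Vpt8),
     solving the ODE there (in the cleared form G C' = F), with C(Vpt8) = Cpt8 and
     C'(Vpt8) the negative root above;
   - continued to [Vpt1, Vpt8] as a positive solution of dC/dV = F/G
     (G nonzero along the curve on (Vpt1, Vpt8)), continuous at Vpt1 from the right. *)
Definition is_P8_solution (m g z : R) (C : R -> R) : Prop :=
  (exists delta : R, 0 < delta /\ exists a : nat -> R,
      forall V, Rabs (V - Vpt8 g z) < delta ->
        is_pseries a (V - Vpt8 g z) (C V) /\
        Gf m g z V (C V) * Derive C V = Ff m g z V (C V)) /\
  C (Vpt8 g z) = Cpt8 g z /\
  (exists c, is_neg_slope m g z c /\ is_derive C (Vpt8 g z) c) /\
  (forall V, Vpt1 g <= V <= Vpt8 g z -> 0 < C V) /\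
  (forall V, Vpt1 g < V < Vpt8 g z ->
      Gf m g z V (C V) <> 0 /\
      is_derive C V (Ff m g z V (C V) / Gf m g z V (C V))) /\
  filterlim C (at_right (Vpt1 g)) (locally (C (Vpt1 g))).

From Stdlib Require Import Reals Lra Psatz.
From Coquelicot Require Import Coquelicot.
Open Scope R_scope.
Set Bullet Behavior "Strict Subproofs".

(* Write [u = Vpt8 g z], so that [Cpt8 g z = 1 + u], and [V1 = Vpt1 g].  Along the
   trajectory [G < 0] on [(V1, u)], because [G] vanishes at P8 and increases through it.
   The line [C = 1 + u] and, left of [V = -(1 + u)^2], the parabola [C^2 = -V] are
   barriers: where the solution meets them the field [F / G] points so that, going
   leftwards from P8, it can only move away from them.  The condition [z <= z1] means
   [u >= (sqrt 5 - 3) / 2], i.e. [-(1 + u)^2 <= u]; at the corner case of equality the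
   admissible slope at P8 is steeper than the parabola.  Hence [C(V1)^2 > -V1], and
   [-V1 >= Cpt1^2] is equivalent to [g <= 1 + sqrt 2].  After eliminating [z] through
   the quadratic equation of [u], the sign conditions on the barriers become polynomial
   inequalities, convex in [g], which are checked at [g = 1] and [g = 3]. *)

Lemma locally_lt (L M : R) : L < M -> locally L (fun y => y < M).
Proof.
  intros H. exists (mkposreal (M - L) ltac:(lra)). intros y Hy.
  change (Rabs (y - L) < M - L) in Hy. apply Rabs_lt_between in Hy. lra.
Qed.

Lemma locally_gt (L M : R) : M < L -> locally L (fun y => M < y).
Proof.
  intros H. exists (mkposreal (L - M) ltac:(lra)). intros y Hy.
  change (Rabs (y - L) < L - M) in Hy. apply Rabs_lt_between in Hy. lra.
Qed.

Lemma ex_derive_continuous_R (f : R -> R) x : ex_derive f x -> continuous f x.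
Proof. apply (@ex_derive_continuous R_AbsRing R_NormedModule). Qed.

Lemma is_derive_neg_slope (f : R -> R) x d : is_derive f x d -> d < 0 ->
  exists eta, 0 < eta /\ forall y, Rabs (y - x) < eta -> y <> x -> (f y - f x) * (y - x) < 0.
Proof.
  intros Hf Hd. apply is_derive_Reals in Hf.
  destruct (Hf (- d / 2)) as [eta Heta]; [lra|].
  exists eta. split; [apply cond_pos|]. intros y Hy Hyx.
  specialize (Heta (y - x) ltac:(lra) Hy). replace (x + (y - x)) with y in Heta by ring.
  apply Rabs_lt_between in Heta.
  assert (Hq : (f y - f x) / (y - x) < 0) by lra.
  replace ((f y - f x) * (y - x)) with ((f y - f x) / (y - x) * (y - x) ^ 2) by (field; lra).
  apply Rmult_neg_pos; [exact Hq|]. apply pow2_gt_0. lra.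
Qed.

Lemma neg_right_of_nonpos (D : R -> R) s d : is_derive D s d -> D s <= 0 ->
  (D s = 0 -> d < 0) -> exists eta, 0 < eta /\ forall y, s < y < s + eta -> D y < 0.
Proof.
  intros Hd Hs Hz. destruct (Rle_lt_or_eq_dec _ _ Hs) as [Hlt|Heq].
  - assert (Hc : continuous D s) by (apply ex_derive_continuous_R; now exists d).
    destruct (Hc _ (locally_lt _ _ Hlt)) as [eta Heta].
    exists eta. split; [apply cond_pos|]. intros y Hy. apply Heta.
    change (Rabs (y - s) < eta). rewrite Rabs_right; lra.
  - destruct (is_derive_neg_slope D s d Hd (Hz Heq)) as [eta [Heta H]].
    exists eta. split; [exact Heta|]. intros y Hy.
    specialize (H y ltac:(rewrite Rabs_right; lra) ltac:(lra)). nra.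
Qed.

Lemma pos_left_of_nonneg (D : R -> R) s d : is_derive D s d -> 0 <= D s ->
  (D s = 0 -> d < 0) -> exists eta, 0 < eta /\ forall y, s - eta < y < s -> 0 < D y.
Proof.
  intros Hd Hs Hz. destruct (Rle_lt_or_eq_dec _ _ Hs) as [Hlt|Heq].
  - assert (Hc : continuous D s) by (apply ex_derive_continuous_R; now exists d).
    destruct (Hc _ (locally_gt _ _ Hlt)) as [eta Heta].
    exists eta. split; [apply cond_pos|]. intros y Hy. apply Heta.
    change (Rabs (y - s) < eta). rewrite Rabs_left; lra.
  - destruct (is_derive_neg_slope D s d Hd (Hz (eq_sym Heq))) as [eta [Heta H]].
    exists eta. split; [exact Heta|]. intros y Hy.
    specialize (H y ltac:(rewrite Rabs_left; lra) ltac:(lra)). nra.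
Qed.

Lemma barrier (D : R -> R) a b : a < b ->
  (forall x, a < x <= b -> ex_derive D x) -> 0 <= D b ->
  (forall x, a < x <= b -> D x = 0 -> Derive D x < 0) ->
  forall x, a < x < b -> 0 < D x.
Proof.
  intros Hab Hder Hb Hzero x0 Hx0.
  assert (Hder' : forall x, a < x <= b -> is_derive D x (Derive D x))
    by (intros x Hx; apply Derive_correct, Hder, Hx).
  destruct (pos_left_of_nonneg D b _ (Hder' b ltac:(lra)) Hb (Hzero b ltac:(lra)))
    as [eta [Heta Hnear]].
  destruct (Rlt_or_le 0 (D x0)) as [|Hx0neg]; [assumption|exfalso].
  destruct (Rlt_or_le (b - eta) x0) as [Hclose|Hfar]; [specialize (Hnear x0); lra|].
  (* the supremum [s] of the points of [[x0, b - eta]] where [D <= 0] still has [D s <= 0],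
     so [D] is negative just to the right of [s], contradicting maximality *)
  set (S := fun y => x0 <= y <= b - eta /\ D y <= 0).
  destruct (completeness S) as [s [Hub Hlub]].
  { exists (b - eta). intros y Hy. apply Hy. }
  { exists x0. split; [lra|assumption]. }
  assert (Hx0s : x0 <= s) by (apply Hub; split; [lra|assumption]).
  assert (Hsb : s <= b - eta) by (apply Hlub; intros y Hy; apply Hy).
  assert (Hds := Hder' s ltac:(lra)).
  assert (Hs : D s <= 0).
  { destruct (Rlt_or_le 0 (D s)) as [Hpos|]; [exfalso|assumption].
    assert (Hc : continuous D s) by (apply ex_derive_continuous_R, Hder; lra).
    destruct (Hc _ (locally_gt _ _ Hpos)) as [d Hd].
    assert (s <= s - d); [|pose proof (cond_pos d); lra].
    apply Hlub. intros y [Hy Hyneg]. specialize (Hub y (conj Hy Hyneg)).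
    destruct (Rle_or_lt y (s - d)) as [|Hlt]; [assumption|].
    assert (0 < D y); [apply Hd; change (Rabs (y - s) < d); rewrite Rabs_left1|]; lra. }
  destruct (neg_right_of_nonpos D s _ Hds Hs (Hzero s ltac:(lra))) as [d [Hd Hright]].
  set (y := s + Rmin d eta / 2).
  assert (0 < Rmin d eta) by (apply Rmin_glb_lt; lra).
  pose proof (Rmin_l d eta). pose proof (Rmin_r d eta).
  assert (Hy : D y < 0) by (apply Hright; unfold y; lra).
  destruct (Rle_or_lt y (b - eta)) as [Hin|Hout].
  - assert (y <= s) by (apply Hub; split; [unfold y in *; lra | lra]). unfold y in *; lra.
  - specialize (Hnear y ltac:(unfold y in *; lra)). lra.
Qed.

Lemma filterlim_at_right_ge (f : R -> R) a L M :
  filterlim f (at_right a) (locally L) -> at_right a (fun x => M <= f x) -> M <= L.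
Proof.
  intros Hf HM.
  exact (filterlim_le (fun _ => M) f M L HM (filterlim_const M) Hf).
Qed.

Lemma strict_decrease (D : R -> R) x y : x < y ->
  (forall c, x <= c <= y -> ex_derive D c) -> (forall c, x <= c <= y -> Derive D c < 0) ->
  D y < D x.
Proof.
  intros Hxy Hder Hneg.
  destruct (MVT_gen D x y (Derive D)) as [c [Hc Heq]];
    rewrite ?Rmin_left, ?Rmax_right in * by lra.
  - intros c Hc. apply Derive_correct, Hder. lra.
  - intros c Hc. apply continuity_pt_filterlim.
    apply ex_derive_continuous_R, Hder. lra.
  - assert (Derive D c < 0) by (apply Hneg; lra). nra.
Qed.

Lemma positive_at_left_end (D : R -> R) a b : a < b ->
  (forall x, a < x < b -> ex_derive D x) -> (forall x, a < x < b -> 0 < D x) ->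
  filterlim D (at_right a) (locally (D a)) ->
  (D a = 0 -> at_right a (fun x => Derive D x < 0)) -> 0 < D a.
Proof.
  intros Hab Hder Hpos Hlim Hdec.
  assert (Hnonneg : 0 <= D a).
  { apply (filterlim_at_right_ge D a _ 0 Hlim).
    exists (mkposreal (b - a) ltac:(lra)). intros y Hy Hay.
    change (Rabs (y - a) < b - a) in Hy. rewrite Rabs_right in Hy by lra.
    left. apply Hpos. lra. }
  destruct (Rle_lt_or_eq_dec _ _ Hnonneg) as [|Hzero]; [assumption|exfalso].
  destruct (Hdec (eq_sym Hzero)) as [eps Heps].
  set (y := a + Rmin eps (b - a) / 2).
  assert (0 < Rmin eps (b - a)) by (apply Rmin_glb_lt; [apply cond_pos|lra]).
  pose proof (Rmin_l eps (b - a)). pose proof (Rmin_r eps (b - a)).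
  assert (Hdy : D y <= D a).
  { apply (filterlim_at_right_ge D a _ _ Hlim).
    exists (mkposreal (y - a) ltac:(unfold y; lra)). intros x Hx Hax.
    change (Rabs (x - a) < y - a) in Hx. rewrite Rabs_right in Hx by lra.
    left. apply strict_decrease; [lra| |].
    - intros c Hc. apply Hder. unfold y in *. lra.
    - intros c Hc. apply Heps; [|lra].
      change (Rabs (c - a) < eps). rewrite Rabs_right by lra. unfold y in *. lra. }
  specialize (Hpos y ltac:(unfold y; lra)). lra.
Qed.

Lemma filterlim_at_right_comp (C : R -> R) (h : R -> R -> R) a :
  filterlim C (at_right a) (locally (C a)) ->
  (forall K : R -> R, continuous K a -> continuous (fun x => h x (K x)) a) ->
  filterlim (fun x => h x (C x)) (at_right a) (locally (h a (C a))).
Proof.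
  intros HC Hh.
  set (K := fun x => if Rle_dec x a then C a else C x).
  assert (HKa : K a = C a) by (unfold K; destruct (Rle_dec a a); lra).
  assert (HK : continuous K a).
  { intros P [eps HP]. rewrite HKa in HP.
    destruct (HC _ (locally_ball (C a) eps)) as [d Hd].
    exists d. intros y Hy. apply HP. unfold K.
    destruct (Rle_dec y a) as [|Hya]; [apply ball_center | apply Hd; [exact Hy|lra]]. }
  specialize (Hh K HK). rewrite <- HKa.
  apply (filterlim_ext_loc (fun x => h x (K x))).
  - exists (mkposreal 1 Rlt_0_1). intros y _ Hay. unfold K.
    destruct (Rle_dec y a); [lra | reflexivity].
  - intros P HP. destruct (Hh P HP) as [d Hd]. exists d. intros y Hy _. now apply Hd.
Qed.

Lemma continuous_pow_comp (f : R -> R) n x : continuous f x -> continuous (fun y => f y ^ n) x.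
Proof.
  intros Hf. induction n as [|n IH]; simpl; [apply continuous_const|].
  apply (continuous_mult f); assumption.
Qed.

Ltac continuity_step :=
  match goal with
  | |- continuous (fun x => ?f + ?g) _ => apply (continuous_plus (fun x => f) (fun x => g))
  | |- continuous (fun x => ?f - ?g) _ =>
      apply (continuous_plus (fun x => f) (fun x => - g)); [|apply (continuous_opp (fun x => g))]
  | |- continuous (fun x => ?f * ?g) _ => apply (continuous_mult (fun x => f) (fun x => g))
  | |- continuous (fun x => ?f / ?g) _ =>
      apply (continuous_mult (fun x => f) (fun x => / g));
      [|apply (continuous_Rinv_comp (fun x => g))]
  | |- continuous (fun x => ?f ^ ?n) _ => apply (continuous_pow_comp (fun x => f))
  | |- continuous (fun x => - ?f) _ => apply (continuous_opp (fun x => f))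
  | |- continuous (fun x => x) _ => apply continuous_id
  | |- continuous (fun x => _) _ => apply continuous_const
  end.

Ltac continuity_at := intros K HK; cbv beta; repeat (assumption || continuity_step); cbv beta; lra.

Lemma is_derive_shift (f : R -> R) k x d : is_derive f x d -> is_derive (fun t => f t - k) x d.
Proof.
  intros H. auto_derive; [now exists d|].
  replace (Derive (fun t => f t) x) with d by (symmetry; now apply is_derive_unique). ring.
Qed.

Lemma is_derive_sq_plus_id (f : R -> R) x d : is_derive f x d ->
  is_derive (fun t => f t ^ 2 + t) x (2 * f x * d + 1).
Proof.
  intros H. auto_derive; [now exists d|].
  replace (Derive (fun t => f t) x) with d by (symmetry; now apply is_derive_unique). ring.
Qed.

Lemma quadratic_neg_root_lt (A B F c s : R) : 0 < A -> F < 0 -> s < 0 ->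
  A * s ^ 2 + B * s + F < 0 -> c < 0 -> A * c ^ 2 + B * c + F = 0 -> c < s.
Proof.
  intros HA HF Hs Hqs Hc Hqc. destruct (Rlt_or_le c s) as [|Hsc]; [assumption|exfalso].
  (* convexity: on [[s, 0]] the quadratic lies below the chord, which is negative *)
  assert (Hchord : s * (A * c ^ 2 + B * c + F)
                   = c * (A * s ^ 2 + B * s + F) + (s - c) * F + A * c * s * (c - s)) by ring.
  rewrite Hqc in Hchord.
  assert (0 <= A * (c * s) * (c - s)) by (apply Rmult_le_pos; [apply Rmult_le_pos|]; nra).
  assert (c * (A * s ^ 2 + B * s + F) > 0) by nra.
  assert ((s - c) * F >= 0) by nra.
  nra.
Qed.

Lemma sqrt5_bounds : sqrt 5 ^ 2 = 5 /\ 2236/1000 < sqrt 5 < 2237/1000.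
Proof.
  assert (H : sqrt 5 * sqrt 5 = 5) by (apply sqrt_sqrt; lra).
  pose proof (sqrt_pos 5). split; [simpl; lra | split; nra].
Qed.

(* [z1 g] is exactly the value of [z] for which the larger root [Vpt8 g z] of the
   quadratic below is [(sqrt 5 - 3) / 2], the root of [u^2 + 3 u + 1]. *)
Lemma Vpt8_spec g z : 1 < g < 3 -> 0 < z <= z1 g ->
  Vpt8 g z ^ 2 + Vpt8 g z * (1 - (g - 2) * z) + 2 * z = 0 /\
  -2/5 <= Vpt8 g z < 0 /\ Vpt8 g z ^ 2 + 3 * Vpt8 g z + 1 >= 0.
Proof.
  intros Hg [Hz0 Hz]. destruct sqrt5_bounds as [H5 H5b].
  set (s5 := sqrt 5) in *. set (b := 1 - (g - 2) * z).
  set (phi := fun v => v ^ 2 + v * b + 2 * z).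
  set (u1 := (s5 - 3) / 2).
  assert (Hz' : z * (2 * (1 + s5 + g)) <= s5 - 1).
  { unfold z1 in Hz. fold s5 in Hz.
    apply Rmult_le_compat_r with (r := 2 * (1 + s5 + g)) in Hz; [|lra].
    replace ((s5 - 1) / (2 * (1 + s5 + g)) * (2 * (1 + s5 + g))) with (s5 - 1) in Hz
      by (field; lra).
    exact Hz. }
  assert (Hphi1 : phi u1 <= 0) by (unfold phi, b, u1; nra).
  assert (Hdisc : 1 - 2 * (g + 2) * z + (g - 2) ^ 2 * z ^ 2 = (2 * u1 + b) ^ 2 - 4 * phi u1)
    by (unfold phi, b; ring).
  assert (Hw : wz g z ^ 2 = (2 * u1 + b) ^ 2 - 4 * phi u1).
  { unfold wz. rewrite Hdisc. apply pow2_sqrt. pose proof (pow2_ge_0 (2 * u1 + b)). lra. }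
  pose proof (sqrt_pos (1 - 2 * (g + 2) * z + (g - 2) ^ 2 * z ^ 2)) as Hw0. fold (wz g z) in Hw0.
  assert (HV8 : Vpt8 g z = (- b + wz g z) / 2) by (unfold Vpt8, b; field).
  rewrite HV8. set (w := wz g z) in *.
  assert (Hb : 0 < b) by (unfold b; nra).
  assert (Hroot : phi ((- b + w) / 2) = 0) by (unfold phi in *; nra).
  assert (Hu1 : u1 <= (- b + w) / 2) by (unfold phi in *; nra).
  assert (Hneg : (- b + w) / 2 < 0) by (unfold phi in *; nra).
  split; [exact Hroot|]. split; [unfold u1 in Hu1; lra|].
  unfold u1 in Hu1. nra.
Qed.

Lemma V8_relation_solve g z u : 1 < g < 3 -> -2/5 <= u < 0 ->
  u ^ 2 + u * (1 - (g - 2) * z) + 2 * z = 0 ->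
  0 < 2 - (g - 2) * u /\ z = - u * (1 + u) / (2 - (g - 2) * u).
Proof.
  intros Hg Hu Hrel. assert (HD : 0 < 2 - (g - 2) * u) by nra.
  split; [exact HD|]. field_simplify_eq; lra.
Qed.

Lemma Vpt1_bounds g : 1 < g < 3 -> -1 < Vpt1 g < -1/2.
Proof.
  intros Hg. unfold Vpt1.
  assert (2 / (g + 1) < 1) by (apply Rmult_lt_reg_r with (g + 1); [lra|]; field_simplify; lra).
  assert (1/2 < 2 / (g + 1)) by (apply Rmult_lt_reg_r with (g + 1); [lra|]; field_simplify; lra).
  lra.
Qed.

Lemma gamma1_lt_3 : gamma1 < 3.
Proof.
  unfold gamma1. pose proof (sqrt_pos 2). pose proof (sqrt_sqrt 2 ltac:(lra)). nra.
Qed.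

(* This is the only place where the upper bound [gamma1] on [g] is needed. *)
Lemma Cpt1_sq_le g : 1 < g <= gamma1 -> Cpt1 g ^ 2 <= - Vpt1 g.
Proof.
  intros [Hg1 Hg2]. unfold Cpt1, Vpt1, gamma1 in *.
  assert (H2 : sqrt 2 * sqrt 2 = 2) by (apply sqrt_sqrt; lra).
  pose proof (sqrt_pos 2).
  replace ((sqrt (2 * g * (g - 1)) / (g + 1)) ^ 2) with (2 * g * (g - 1) / (g + 1) ^ 2)
    by (unfold Rdiv; rewrite Rpow_mult_distr, pow2_sqrt, pow_inv by nra; reflexivity).
  replace (- - (2 / (g + 1))) with (2 * (g + 1) / (g + 1) ^ 2) by (field; lra).
  apply Rmult_le_compat_r; [apply Rlt_le, Rinv_0_lt_compat; nra|].
  assert ((g - 1) ^ 2 <= 2) by nra. nra.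
Qed.

Lemma G_V_at_P8 m g z :
  G_V m g z = (1 + Vpt8 g z) * (m + (m - 2) * Vpt8 g z) - m * g * z * (2 * Vpt8 g z + 1).
Proof. unfold G_V, Cpt8. apply is_derive_unique. unfold Gf, lam. auto_derive; [easy | ring]. Qed.

Lemma G_C_at_P8 m g z : G_C m g z = 2 * (1 + Vpt8 g z) * ((m + 1) * Vpt8 g z + 2 * m * z).
Proof. unfold G_C, Cpt8. apply is_derive_unique. unfold Gf. auto_derive; [easy | ring]. Qed.

Lemma F_V_at_P8 m g z : 1 + Vpt8 g z <> 0 ->
  F_V m g z = (1 + Vpt8 g z) * (a2 m g z - m * z - 2 * a1 m g * (1 + Vpt8 g z)).
Proof.
  intros Hu. unfold F_V, Cpt8. apply is_derive_unique. unfold Ff.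
  auto_derive; [exact Hu | field; exact Hu].
Qed.

Lemma F_C_at_P8 m g z : 1 + Vpt8 g z <> 0 ->
  Vpt8 g z ^ 2 + Vpt8 g z * (1 - (g - 2) * z) + 2 * z = 0 ->
  F_C m g z = 2 * (1 + Vpt8 g z) * (1 + Vpt8 g z + m * z).
Proof.
  intros Hu Hrel. unfold F_C, Cpt8. apply is_derive_unique. unfold Ff.
  set (u := Vpt8 g z) in *. auto_derive; [easy|].
  (* the bracket of [Ff] is a multiple of the quadratic defining [Vpt8], hence vanishes *)
  replace (2 * (1 + u) * (1 + u + m * z)) with
    (2 * (1 + u) * (1 + u + m * z) - m * (g - 1) / 2 * (u ^ 2 + u * (1 - (g - 2) * z) + 2 * z))
    by (rewrite Hrel; ring).
  unfold a1, a2, a3. field. exact Hu.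
Qed.

Lemma is_derive_Gf_comp m g z (K : R -> R) x d : is_derive K x d ->
  is_derive (fun V => Gf m g z V (K V)) x
    (Derive (fun V => Gf m g z V (K x)) x + Derive (fun C => Gf m g z x C) (K x) * d).
Proof.
  intros HK.
  assert (HV : Derive (fun V => Gf m g z V (K x)) x
               = K x ^ 2 * (m + 1)
                 - ((1 + x) * (lam m g z + x) + x * (lam m g z + x) + x * (1 + x))).
  { apply is_derive_unique. unfold Gf. auto_derive; [easy | ring]. }
  assert (HC : Derive (fun C => Gf m g z x C) (K x) = 2 * K x * ((m + 1) * x + 2 * m * z)).
  { apply is_derive_unique. unfold Gf. auto_derive; [easy | ring]. }
  rewrite HV, HC. unfold Gf. auto_derive; [now exists d|].
  replace (Derive (fun t => K t) x) with d by (symmetry; now apply is_derive_unique). ring.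
Qed.

Section AtP8.

Variables (m g z : R).

Hypotheses (Hm : m = 1 \/ m = 2) (Hg : 1 < g < 3) (Hz : 0 < z <= z1 g).

Lemma Gf_P8 : Gf m g z (Vpt8 g z) (Cpt8 g z) = 0.
Proof.
  destruct (Vpt8_spec g z Hg Hz) as [Hrel _]. unfold Gf, lam, Cpt8.
  set (u := Vpt8 g z) in *.
  replace ((1 + u) ^ 2 * ((m + 1) * u + 2 * m * z) - u * (1 + u) * (1 + m * g * z + u))
    with ((1 + u) * m * (u ^ 2 + u * (1 - (g - 2) * z) + 2 * z)) by ring.
  rewrite Hrel. ring.
Qed.

Lemma G_C_neg : G_C m g z < 0.
Proof.
  destruct (Vpt8_spec g z Hg Hz) as [Hrel [Hu _]]. rewrite G_C_at_P8.
  set (u := Vpt8 g z) in *.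
  destruct (V8_relation_solve g z u Hg Hu Hrel) as [HD _].
  assert (Hzu : z * (2 - (g - 2) * u) = - u * (1 + u)) by lra.
  assert ((m + 1) * u + 2 * m * z < 0) by (destruct Hm; subst; nra).
  nra.
Qed.

Lemma G_V_pos : 0 < G_V m g z.
Proof.
  destruct (Vpt8_spec g z Hg Hz) as [Hrel [Hu _]]. rewrite G_V_at_P8.
  set (u := Vpt8 g z) in *. clearbody u.
  destruct (V8_relation_solve g z u Hg Hu Hrel) as [HD ->].
  replace ((1 + u) * (m + (m - 2) * u) - m * g * (- u * (1 + u) / (2 - (g - 2) * u)) * (2 * u + 1))
    with ((1 + u) * ((m + (m - 2) * u) * (2 - (g - 2) * u) + m * g * u * (2 * u + 1))
          / (2 - (g - 2) * u)) by (field; lra).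
  apply Rdiv_lt_0_compat; [apply Rmult_lt_0_compat; [lra|] | exact HD].
  destruct Hm; subst; nra.
Qed.

Lemma F_V_neg : F_V m g z < 0.
Proof.
  destruct (Vpt8_spec g z Hg Hz) as [_ [Hu _]]. rewrite F_V_at_P8 by lra.
  apply Rmult_pos_neg; [lra|]. unfold a1, a2.
  assert (0 < z * (g * (3 - g))) by (apply Rmult_lt_0_compat; nra).
  destruct Hm; subst; nra.
Qed.

(* At the corner [Vpt8 = (sqrt 5 - 3) / 2] the slope [s0] of the parabola [C^2 = -V]
   lies strictly between the two roots of the slope quadratic. *)
Lemma slope_quadratic_neg_at_corner : Vpt8 g z ^ 2 + 3 * Vpt8 g z + 1 = 0 ->
  let s0 := - / (2 * Cpt8 g z) in
  - G_C m g z * s0 ^ 2 + (F_C m g z - G_V m g z) * s0 + F_V m g z < 0.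
Proof.
  intros Hcorner s0. destruct (Vpt8_spec g z Hg Hz) as [Hrel [Hu _]].
  rewrite G_C_at_P8, G_V_at_P8, F_C_at_P8, F_V_at_P8 by lra.
  unfold s0, Cpt8. set (u := Vpt8 g z) in *. clearbody u.
  destruct (V8_relation_solve g z u Hg Hu Hrel) as [HD ->].
  set (c := 1 + u). replace u with (c - 1) by (unfold c; ring).
  assert (Hc : c ^ 2 + c - 1 = 0) by (unfold c; lra).
  assert (Hcb : 618/1000 < c < 6181/10000) by (unfold c; nra).
  assert (Hpos : 0 < 4 * c * (2 - (g - 2) * (c - 1))) by nra.
  apply (Rmult_lt_reg_r _ _ _ Hpos). rewrite Rmult_0_l.
  match goal with |- ?Q * _ < 0 =>
    replace (Q * (4 * c * (2 - (g - 2) * (c - 1)))) with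
      (2*m*c^4*g^2 - 6*m*c^4*g + 12*m*c^4 - 4*m*c^3*g^2 + 6*m*c^3*g + 2*m*c^2*g^2
       - 4*m*c^2*g - 4*m*c^2 - 2*m*c*g + 2*m*g + 8*c^4*g - 16*c^4 - 16*c^3 - 10*c^2*g
       + 4*c^2 + 4*c + 2*g) by (unfold a1, a2; field; nra)
  end.
  assert (H3 : c ^ 3 = 2 * c - 1) by nra. assert (H4 : c ^ 4 = 2 - 3 * c) by nra.
  rewrite H3, H4. replace (c ^ 2) with (1 - c) by lra.
  destruct Hm; subst; nra.
Qed.

End AtP8.

Definition line_poly (m V u g : R) : R :=
  m * (V^2*u*g^2 - 3*V^2*u*g + 2*V^2*u - 2*V^2*g + 2*V^2 + 2*V*u^2 + V*u*g^2 - 5*V*u*g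
       + 6*V*u - 4*V*g + 4*V + 2*u^3 + 6*u^2 - 2*u*g + 6*u - 2*g + 2)
  + (2*V^2*u*g - 4*V^2*u - 4*V^2 + 2*V*u^2*g - 4*V*u^2 + 6*V*u*g - 16*V*u - 12*V
     + 2*u^2*g - 4*u^2 + 4*u*g - 12*u - 8).

Definition parabola_poly (m V u g : R) : R :=
  m * (-2*V^3*u*g^2 + 6*V^3*u*g - 4*V^3*u + 4*V^3*g - 4*V^3 + 2*V^2*u^2*g^2 - 4*V^2*u^2*g
       - 2*V^2*u*g^2 + 10*V^2*u*g - 12*V^2*u + 8*V^2*g - 12*V^2 + 2*V*u^2*g^2 - 6*V*u^2*g
       + 2*V*u*g - 8*V*u + 4*V*g - 8*V - 2*u^2*g + 4*u^2 - 2*u*g + 4*u)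
  + (-2*V^3*u*g + 4*V^3*u + 4*V^3 - 8*V^2*u*g + 16*V^2*u + 16*V^2 - 8*V*u*g + 16*V*u
     + 16*V - 2*u*g + 4*u + 4).

Lemma Ff_on_line m g z u x : 1 < g < 3 -> -2/5 <= u < 0 -> -1 < x ->
  u ^ 2 + u * (1 - (g - 2) * z) + 2 * z = 0 ->
  Ff m g z x (1 + u) = (1 + u) * (x - u) * line_poly m x u g / (2 * (1 + x) * (2 - (g - 2) * u)).
Proof.
  intros Hg Hu Hx Hrel. destruct (V8_relation_solve g z u Hg Hu Hrel) as [HD ->].
  unfold Ff, a1, a2, a3, line_poly. field. lra.
Qed.

Lemma Ff_Gf_on_parabola m g z u x C : 1 < g < 3 -> -2/5 <= u < 0 -> -1 < x -> C ^ 2 = - x ->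
  u ^ 2 + u * (1 - (g - 2) * z) + 2 * z = 0 ->
  2 * C * Ff m g z x C + Gf m g z x C
  = x * parabola_poly m x u g / (2 * (1 + x) * (2 - (g - 2) * u)).
Proof.
  intros Hg Hu Hx HC Hrel.
  replace (2 * C * Ff m g z x C) with
    (2 * C ^ 2 * (C ^ 2 * (1 + m * z / (1 + x)) - a1 m g * (1 + x) ^ 2
                  + a2 m g z * (1 + x) - a3 m g z))
    by (unfold Ff; ring).
  destruct (V8_relation_solve g z u Hg Hu Hrel) as [HD ->].
  unfold Gf, lam, a1, a2, a3, parabola_poly. rewrite HC. field. lra.
Qed.

Lemma line_poly_neg_at m g V u : (m = 1 \/ m = 2) -> (g = 1 \/ g = 3) ->
  -2/5 <= u < 0 -> -1 < V < u -> line_poly m V u g < 0.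
Proof.
  intros Hm Hg Hu HV.
  assert (0 < (V + 1) * (u - V)) by nra. assert (0 < (V + 1) * - u) by nra.
  assert (0 < (u - V) * - u) by nra.
  unfold line_poly. destruct Hm, Hg; subst; nra.
Qed.

Lemma line_poly_neg m g V u : (m = 1 \/ m = 2) -> 1 <= g <= 3 ->
  -2/5 <= u < 0 -> -1 < V < u -> line_poly m V u g < 0.
Proof.
  intros Hm Hg Hu HV.
  assert (H1 := line_poly_neg_at m 1 V u Hm (or_introl eq_refl) Hu HV).
  assert (H3 := line_poly_neg_at m 3 V u Hm (or_intror eq_refl) Hu HV).
  (* [line_poly] is a convex quadratic in [g] *)
  replace (line_poly m V u g) with
    (((3 - g) * line_poly m V u 1 + (g - 1) * line_poly m V u 3) / 2
     - m * u * V * (V + 1) * ((g - 1) * (3 - g))) by (unfold line_poly; field).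
  assert (0 <= m * (u * V) * (V + 1))
    by (apply Rmult_le_pos; [apply Rmult_le_pos|]; destruct Hm; nra).
  assert (0 <= (g - 1) * (3 - g)) by nra.
  assert ((3 - g) * line_poly m V u 1 + (g - 1) * line_poly m V u 3 < 0) by nra.
  nra.
Qed.

Definition bernstein4 (b0 b1 b2 b3 b4 t : R) : R :=
  b0 * (1 - t) ^ 4 + 4 * b1 * t * (1 - t) ^ 3 + 6 * b2 * t ^ 2 * (1 - t) ^ 2
  + 4 * b3 * t ^ 3 * (1 - t) + b4 * t ^ 4.

Lemma bernstein4_neg (a b0 b1 b2 b3 b4 t : R) : 0 <= t <= 1 -> 0 <= a ->
  b0 < 0 -> b1 <= 0 -> b2 <= 0 -> b3 <= 0 -> b4 < 0 -> (0 < t \/ 0 < a) ->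
  bernstein4 (a * b0) b1 b2 b3 b4 t < 0.
Proof.
  intros Ht Ha H0 H1 H2 H3 H4 Hstrict. unfold bernstein4.
  assert (0 <= t * (1 - t) ^ 3) by (apply Rmult_le_pos; [|apply pow_le]; lra).
  assert (0 <= t ^ 2 * (1 - t) ^ 2) by (apply Rmult_le_pos; apply pow_le; lra).
  assert (0 <= t ^ 3 * (1 - t)) by (apply Rmult_le_pos; [apply pow_le|]; lra).
  assert (0 <= (1 - t) ^ 4) by (apply pow_le; lra).
  assert (a * b0 <= 0) by nra.
  destruct (Rle_lt_or_eq_dec 0 t (proj1 Ht)) as [Ht0|<-].
  - assert (0 < t ^ 4) by (apply pow_lt; lra). nra.
  - destruct Hstrict as [|Ha0]; [lra|]. assert (a * b0 < 0) by nra. nra.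
Qed.

Ltac nra_on_3_5_1 c :=
  assert (0 <= 1 - c) by lra; assert (0 <= c - 3/5) by lra;
  assert (0 <= (1 - c) * (c - 3/5)) by nra; assert (0 <= (1 - c) ^ 2 * (c - 3/5)) by nra;
  assert (0 <= (1 - c) * (c - 3/5) ^ 2) by nra; assert (0 <= (1 - c) * c ^ 2) by nra;
  assert (0 <= (1 - c) * c ^ 3) by nra; assert (0 <= (1 - c) * c ^ 4) by nra;
  assert (0 <= (1 - c) * c ^ 5) by nra; nra.

(* With [c = 1 + u] and [V = -(c^2 + (1 - c^2) t)] the parabola region becomes
   [0 <= t <= 1]; at [g = 1, 3] the Bernstein coefficients in [t] are polynomials in [c]
   of constant sign on [[3/5, 1]], and the first one carries the factor [c^2 + c - 1],
   which vanishes only at the corner. *)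
Lemma parabola_poly_neg_at m g V u : (m = 1 \/ m = 2) -> (g = 1 \/ g = 3) ->
  -2/5 <= u < 0 -> u ^ 2 + 3 * u + 1 >= 0 -> -1 <= V <= - (1 + u) ^ 2 ->
  (V < - (1 + u) ^ 2 \/ u ^ 2 + 3 * u + 1 > 0) -> parabola_poly m V u g < 0.
Proof.
  intros Hm Hg Hu Hs HV Hstrict.
  set (c := 1 + u). assert (Hc : 3/5 <= c < 1) by (unfold c; lra).
  assert (Hgold : c ^ 2 + c - 1 >= 0) by (unfold c; lra).
  set (t := (- V - c ^ 2) / (1 - c ^ 2)).
  assert (Hc2 : 0 < 1 - c ^ 2) by nra.
  assert (HVt : V = - (c ^ 2 + (1 - c ^ 2) * t)) by (unfold t; field; lra).
  assert (HVc : V <= - c ^ 2) by (unfold c; lra).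
  assert (Ht : 0 <= t <= 1) by (split; nra).
  assert (Hstrict' : 0 < t \/ c ^ 2 + c - 1 > 0).
  { destruct Hstrict as [HV'|Hs']; [left | right; unfold c; lra].
    assert (V < - c ^ 2) by (unfold c; lra). nra. }
  replace u with (c - 1) by (unfold c; ring). rewrite HVt. clearbody t. clearbody c. clear HVt.
  destruct Hm, Hg; subst.
  - replace (parabola_poly 1 (- (c ^ 2 + (1 - c ^ 2) * t)) (c - 1) 1) with
      (bernstein4 ((c^2+c-1) * ((1-c)*(-2 - 4*c - 4*c^2 + 4*c^3 + 2*c^4)))
        (1/2 - 5/2*c + 3/2*c^2 - 7/2*c^3 + 7/2*c^4 + 5/2*c^5 - 3/2*c^6 - 1/2*c^7)
        (-11/3*c + 11/3*c^2 - 2/3*c^3 + 2/3*c^4 + 1/3*c^5 - 1/3*c^6)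
        (-4*c + 4*c^2) (-4*c + 4*c^2) t)
      by (unfold bernstein4, parabola_poly; field).
    apply bernstein4_neg; [assumption | lra | | | | | | lra].
    all: nra_on_3_5_1 c.
  - replace (parabola_poly 1 (- (c ^ 2 + (1 - c ^ 2) * t)) (c - 1) 3) with
      (bernstein4 ((c^2+c-1) * ((1-c)*(-6 - 12*c + 8*c^2 + 12*c^3 - 6*c^4)))
        (-3/2 + 5/2*c - 7/2*c^2 - 5/2*c^3 + 21/2*c^4 - 11/2*c^5 - 3/2*c^6 + 3/2*c^7)
        (-2 + 5/3*c + 3*c^2 - 16/3*c^3 + 2*c^4 - 1/3*c^5 + c^6)
        (-c + c^2 - 3*c^3 + 3*c^4) (-4*c + 4*c^2) t)
      by (unfold bernstein4, parabola_poly; field).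
    apply bernstein4_neg; [assumption | lra | | | | | | lra].
    all: nra_on_3_5_1 c.
  - replace (parabola_poly 2 (- (c ^ 2 + (1 - c ^ 2) * t)) (c - 1) 1) with
      (bernstein4 ((c^2+c-1) * ((1-c)^2*(-2 - 4*c - 8*c^2 - 2*c^3)))
        (1 - 5*c + 5*c^2 - 5*c^3 + 9/2*c^4 + 5/2*c^5 - 5/2*c^6 - 1/2*c^7)
        (2/3 - 20/3*c + 7*c^2 - 5/3*c^3 + c^4 + 1/3*c^5 - 2/3*c^6)
        (1/2 - 15/2*c + 15/2*c^2 - 1/2*c^3) (-8*c + 8*c^2) t)
      by (unfold bernstein4, parabola_poly; field).
    apply bernstein4_neg; [assumption | lra | | | | | | lra].
    all: nra_on_3_5_1 c.
  - replace (parabola_poly 2 (- (c ^ 2 + (1 - c ^ 2) * t)) (c - 1) 3) with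
      (bernstein4 ((c^2+c-1) * ((1-c)^2*(-6 - 20*c - 8*c^2 + 10*c^3)))
        (-3 + 5*c - c^2 - 7*c^3 + 27/2*c^4 - 17/2*c^5 - 3/2*c^6 + 5/2*c^7)
        (-2 + 8/3*c + 5*c^2 - 31/3*c^3 + 3*c^4 - 1/3*c^5 + 2*c^6)
        (3/2 - 5/2*c + 1/2*c^2 - 11/2*c^3 + 6*c^4) (-8*c + 8*c^2) t)
      by (unfold bernstein4, parabola_poly; field).
    apply bernstein4_neg; [assumption | lra | | | | | | lra].
    all: nra_on_3_5_1 c.
Qed.

Lemma parabola_poly_neg m g V u : (m = 1 \/ m = 2) -> 1 <= g <= 3 ->
  -2/5 <= u < 0 -> u ^ 2 + 3 * u + 1 >= 0 -> -1 <= V <= - (1 + u) ^ 2 ->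
  (V < - (1 + u) ^ 2 \/ u ^ 2 + 3 * u + 1 > 0) -> parabola_poly m V u g < 0.
Proof.
  intros Hm Hg Hu Hs HV Hstrict.
  assert (H1 := parabola_poly_neg_at m 1 V u Hm (or_introl eq_refl) Hu Hs HV Hstrict).
  assert (H3 := parabola_poly_neg_at m 3 V u Hm (or_intror eq_refl) Hu Hs HV Hstrict).
  (* [parabola_poly] is a convex quadratic in [g] *)
  replace (parabola_poly m V u g) with
    (((3 - g) * parabola_poly m V u 1 + (g - 1) * parabola_poly m V u 3) / 2
     - 2 * m * u * V * (u - V) * (1 + V) * ((g - 1) * (3 - g))) by (unfold parabola_poly; field).
  assert (HV0 : V <= u) by nra.
  assert (0 <= (u * V) * ((u - V) * (1 + V))) by (apply Rmult_le_pos; nra).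
  assert (0 <= (g - 1) * (3 - g)) by nra.
  assert ((3 - g) * parabola_poly m V u 1 + (g - 1) * parabola_poly m V u 3 < 0) by nra.
  destruct Hm; subst; nra.
Qed.

Lemma Ff_pos_on_line m g z u x : (m = 1 \/ m = 2) -> 1 < g < 3 -> -2/5 <= u < 0 ->
  u ^ 2 + u * (1 - (g - 2) * z) + 2 * z = 0 -> -1 < x < u -> 0 < Ff m g z x (1 + u).
Proof.
  intros Hm Hg Hu Hrel Hx.
  rewrite (Ff_on_line m g z u x Hg Hu (proj1 Hx) Hrel).
  assert (line_poly m x u g < 0) by (apply line_poly_neg; lra).
  assert (0 < 2 - (g - 2) * u) by nra.
  apply Rdiv_lt_0_compat; [|nra].
  assert (0 < (1 + u) * (u - x)) by (apply Rmult_lt_0_compat; lra). nra.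
Qed.

Lemma parabola_crossing_pos m g z u x C : (m = 1 \/ m = 2) -> 1 < g < 3 -> -2/5 <= u < 0 ->
  u ^ 2 + u * (1 - (g - 2) * z) + 2 * z = 0 -> u ^ 2 + 3 * u + 1 >= 0 ->
  -1 < x <= - (1 + u) ^ 2 -> (x < - (1 + u) ^ 2 \/ u ^ 2 + 3 * u + 1 > 0) -> C ^ 2 = - x ->
  0 < 2 * C * Ff m g z x C + Gf m g z x C.
Proof.
  intros Hm Hg Hu Hrel Hs Hx Hstrict HC.
  rewrite (Ff_Gf_on_parabola m g z u x C Hg Hu (proj1 Hx) HC Hrel).
  assert (parabola_poly m x u g < 0) by (apply parabola_poly_neg; lra).
  assert (0 < 2 - (g - 2) * u) by nra. assert (x < 0) by nra.
  apply Rdiv_lt_0_compat; nra.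
Qed.

Section Trajectory.

Variables (m g z c : R) (C : R -> R).
Hypotheses (Hm : m = 1 \/ m = 2) (Hg : 1 < g < 3) (Hz : 0 < z <= z1 g)
  (Hslope : is_neg_slope m g z c) (HdC : is_derive C (Vpt8 g z) c)
  (HC8 : C (Vpt8 g z) = Cpt8 g z)
  (Hode : forall V, Vpt1 g < V < Vpt8 g z ->
     Gf m g z V (C V) <> 0 /\ is_derive C V (Ff m g z V (C V) / Gf m g z V (C V)))
  (Hlim : filterlim C (at_right (Vpt1 g)) (locally (C (Vpt1 g)))).

Local Notation u := (Vpt8 g z).
Local Notation V1 := (Vpt1 g).

Let Hrel := proj1 (Vpt8_spec g z Hg Hz).
Let Hu := proj1 (proj2 (Vpt8_spec g z Hg Hz)).
Let Hgold := proj2 (proj2 (Vpt8_spec g z Hg Hz)).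
Let HV1 := Vpt1_bounds g Hg.

Lemma ex_derive_C x : V1 < x <= u -> ex_derive C x.
Proof.
  intros Hx. destruct (Rle_lt_or_eq_dec x u (proj2 Hx)) as [Hxu| ->].
  - eexists. apply Hode. lra.
  - now exists c.
Qed.

Lemma G_neg_along x : V1 < x < u -> Gf m g z x (C x) < 0.
Proof.
  intros Hx. enough (0 < - Gf m g z x (C x)) by lra.
  apply (barrier (fun t => - Gf m g z t (C t)) V1 u); [lra | | | | exact Hx].
  - intros t Ht. destruct (ex_derive_C t Ht) as [d Hd].
    eexists. apply (is_derive_opp (fun t => Gf m g z t (C t))), is_derive_Gf_comp, Hd.
  - rewrite HC8, Gf_P8 by assumption. lra.
  - intros t Ht Ht0. destruct (Rle_lt_or_eq_dec t u (proj2 Ht)) as [Htu| ->].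
    + exfalso. apply (proj1 (Hode t ltac:(lra))). lra.
    + replace (Derive (fun t => - Gf m g z t (C t)) u) with (- (G_V m g z + G_C m g z * c)).
      2: { symmetry. apply is_derive_unique. unfold G_V, G_C. rewrite <- HC8.
           apply (is_derive_opp (fun t => Gf m g z t (C t))), is_derive_Gf_comp, HdC. }
      pose proof (G_V_pos m g z Hm Hg Hz). pose proof (G_C_neg m g z Hm Hg Hz).
      destruct Hslope. nra.
Qed.

Lemma at_right_V1_below_u : at_right V1 (fun x => x < u).
Proof.
  exists (mkposreal (u - V1) ltac:(lra)). intros y Hy _.
  change (Rabs (y - V1) < u - V1) in Hy. apply Rabs_lt_between in Hy. lra.
Qed.

Lemma Derive_C_shift k x : V1 < x < u ->
  Derive (fun t => C t - k) x = Ff m g z x (C x) / Gf m g z x (C x).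
Proof. intros Hx. apply is_derive_unique, is_derive_shift, Hode, Hx. Qed.

Lemma Derive_C_sq_plus_id x : V1 < x < u ->
  Derive (fun t => C t ^ 2 + t) x
  = (2 * C x * Ff m g z x (C x) + Gf m g z x (C x)) / Gf m g z x (C x).
Proof.
  intros Hx. apply is_derive_unique.
  replace ((2 * C x * Ff m g z x (C x) + Gf m g z x (C x)) / Gf m g z x (C x))
    with (2 * C x * (Ff m g z x (C x) / Gf m g z x (C x)) + 1) by (field; apply Hode, Hx).
  apply is_derive_sq_plus_id, Hode, Hx.
Qed.

Lemma Derive_neg_near_V1 (D : R -> R) (h : R -> R -> R) :
  (forall K : R -> R, continuous K V1 -> continuous (fun x => h x (K x)) V1) ->
  0 < h V1 (C V1) -> (forall x, V1 < x < u -> Derive D x = h x (C x) / Gf m g z x (C x)) ->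
  at_right V1 (fun x => Derive D x < 0).
Proof.
  intros Hcont Hh HD.
  assert (Hnear : at_right V1 (fun x => 0 < h x (C x)))
    by exact (filterlim_at_right_comp C h V1 Hlim Hcont _ (locally_gt _ _ Hh)).
  assert (Hright : at_right V1 (fun x => V1 < x)) by (exists (mkposreal 1 Rlt_0_1); auto).
  apply (filter_imp (fun x => (0 < h x (C x) /\ V1 < x) /\ x < u));
    [|repeat apply filter_and; assumption || apply at_right_V1_below_u].
  intros x [[Hhx HV1x] Hxu]. rewrite HD by lra.
  apply Rdiv_pos_neg; [exact Hhx | apply G_neg_along; lra].
Qed.

Lemma C_gt_line x : V1 < x < u -> 1 + u < C x.
Proof.
  intros Hx. enough (0 < C x - (1 + u)) by lra.
  apply (barrier (fun t => C t - (1 + u)) V1 u); [lra | | | | exact Hx].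
  - intros t Ht. destruct (ex_derive_C t Ht) as [d Hd]. eexists. apply is_derive_shift, Hd.
  - rewrite HC8. unfold Cpt8. lra.
  - intros t Ht Ht0. destruct (Rle_lt_or_eq_dec t u (proj2 Ht)) as [Htu| ->].
    + rewrite Derive_C_shift by lra. replace (C t) with (1 + u) by lra.
      apply Rdiv_pos_neg.
      * apply (Ff_pos_on_line m g z u t Hm Hg Hu Hrel). lra.
      * replace (1 + u) with (C t) by lra. apply G_neg_along. lra.
    + replace (Derive (fun t => C t - (1 + u)) u) with c by
        (symmetry; apply is_derive_unique, is_derive_shift, HdC).
      apply Hslope.
Qed.

Lemma C_V1_gt_line : 1 + u < C V1.
Proof.
  enough (0 < C V1 - (1 + u)) by lra.
  apply (positive_at_left_end (fun t => C t - (1 + u)) V1 u); [lra | | | | ].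
  - intros x Hx. destruct (ex_derive_C x ltac:(lra)) as [d Hd].
    eexists. apply is_derive_shift, Hd.
  - intros x Hx. pose proof (C_gt_line x Hx). lra.
  - apply (filterlim_at_right_comp C (fun x y => y - (1 + u))); [exact Hlim | continuity_at].
  - intros Hzero. apply (Derive_neg_near_V1 _ (fun x y => Ff m g z x y)).
    + unfold Ff. continuity_at.
    + replace (C V1) with (1 + u) by lra. apply (Ff_pos_on_line m g z u V1 Hm Hg Hu Hrel). lra.
    + intros x Hx. apply Derive_C_shift, Hx.
Qed.

Lemma corner_slope_steeper : u ^ 2 + 3 * u + 1 = 0 -> 2 * C u * c + 1 < 0.
Proof.
  intros Hcorner. rewrite HC8.
  assert (Hs0 : c < - / (2 * Cpt8 g z)).
  { destruct Hslope as [Hc Hq].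
    apply (quadratic_neg_root_lt (- G_C m g z) (F_C m g z - G_V m g z) (F_V m g z));
      [pose proof (G_C_neg m g z Hm Hg Hz); lra | apply F_V_neg; assumption | | | exact Hc | lra].
    - unfold Cpt8. assert (0 < / (2 * (1 + u))) by (apply Rinv_0_lt_compat; lra). lra.
    - apply slope_quadratic_neg_at_corner; assumption. }
  unfold Cpt8 in *. apply (Rmult_lt_compat_l (2 * (1 + u))) in Hs0; [|lra].
  replace (2 * (1 + u) * - / (2 * (1 + u))) with (-1) in Hs0 by (field; lra). lra.
Qed.

Lemma C_sq_gt_parabola x : V1 < x < - (1 + u) ^ 2 -> - x < C x ^ 2.
Proof.
  intros Hx. set (Vt := - (1 + u) ^ 2) in *.
  assert (HVt : Vt <= u) by (unfold Vt; nra).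
  enough (0 < C x ^ 2 + x) by lra.
  apply (barrier (fun t => C t ^ 2 + t) V1 Vt); [lra | | | | exact Hx].
  - intros t Ht. destruct (ex_derive_C t ltac:(lra)) as [d Hd].
    eexists. apply is_derive_sq_plus_id, Hd.
  - assert (1 + u <= C Vt).
    { destruct (Rle_lt_or_eq_dec Vt u HVt) as [Hlt| ->].
      - left. apply C_gt_line. lra.
      - rewrite HC8. unfold Cpt8. lra. }
    unfold Vt in *. nra.
  - intros t Ht Ht0. destruct (Rle_lt_or_eq_dec t u ltac:(lra)) as [Htu| ->].
    + rewrite Derive_C_sq_plus_id by lra. apply Rdiv_pos_neg; [|apply G_neg_along; lra].
      apply (parabola_crossing_pos m g z u t (C t) Hm Hg Hu Hrel Hgold);
        [unfold Vt in Ht; lra | | lra].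
      destruct (Rle_lt_or_eq_dec t Vt (proj2 Ht)) as [| ->]; [left; assumption|right].
      unfold Vt in Htu. nra.
    + replace (Derive (fun t => C t ^ 2 + t) u) with (2 * C u * c + 1)
        by (symmetry; apply is_derive_unique, is_derive_sq_plus_id, HdC).
      apply corner_slope_steeper. unfold Vt in *. nra.
Qed.

Lemma C_V1_sq_gt : - V1 < C V1 ^ 2.
Proof.
  pose proof C_V1_gt_line as Hline.
  destruct (Rle_or_lt (- (1 + u) ^ 2) V1) as [Hfar|Hnear]; [nra|].
  enough (0 < C V1 ^ 2 + V1) by lra.
  apply (positive_at_left_end (fun t => C t ^ 2 + t) V1 (- (1 + u) ^ 2)); [lra | | | | ].
  - intros x Hx. destruct (ex_derive_C x ltac:(nra)) as [d Hd].
    eexists. apply is_derive_sq_plus_id, Hd.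
  - intros x Hx. pose proof (C_sq_gt_parabola x Hx). lra.
  - apply (filterlim_at_right_comp C (fun x y => y ^ 2 + x)); [exact Hlim | continuity_at].
  - intros Hzero.
    apply (Derive_neg_near_V1 _ (fun x y => 2 * y * Ff m g z x y + Gf m g z x y)).
    + unfold Ff, Gf. continuity_at.
    + apply (parabola_crossing_pos m g z u V1 (C V1) Hm Hg Hu Hrel Hgold); lra.
    + intros x Hx. apply Derive_C_sq_plus_id, Hx.
Qed.

End Trajectory.

Theorem mainTheorem14 (m g gs : R)
  (Hm : m = 1 \/ m = 2) (Hgs : is_gamma_star gs) (Hg : gs < g <= gamma1) :
  (forall (z : R) (C : R -> R), 0 < z <= z1 g ->
      is_P8_solution m g z C -> C (Vpt1 g) > Cpt1 g) /\
  (forall (z : R) (C : R -> R), 0 < z <= zM g ->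
      is_P8_solution m g z C -> C (Vpt1 g) = Cpt1 g -> z1 g < z <= zM g).
Proof.
  destruct Hgs as [Hgs1 _]. pose proof gamma1_lt_3.
  assert (Hg3 : 1 < g < 3) by lra.
  assert (Hbelow : forall z C, 0 < z <= z1 g -> is_P8_solution m g z C -> Cpt1 g < C (Vpt1 g)).
  { intros z C Hz (_ & HC8 & (c & Hslope & HdC) & _ & Hode & Hlim).
    pose proof (C_V1_sq_gt m g z c C Hm Hg3 Hz Hslope HdC HC8 Hode Hlim).
    pose proof (C_V1_gt_line m g z c C Hm Hg3 Hz Hslope HdC HC8 Hode Hlim).
    pose proof (proj1 (proj2 (Vpt8_spec g z Hg3 Hz))).
    pose proof (Cpt1_sq_le g ltac:(lra)).
    assert (0 <= Cpt1 g) by (unfold Cpt1; apply Rdiv_le_0_compat; [apply sqrt_pos | lra]).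
    nra. }
  split; [exact Hbelow|].
  intros z C Hz HP HV1. split; [|apply Hz].
  destruct (Rlt_or_le (z1 g) z) as [|Hle]; [assumption|].
  pose proof (Hbelow z C (conj (proj1 Hz) Hle) HP). lra.
Qed.
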